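(* For any $\beta\in Q^\vee$ and $i,j\in I$, the element $f_i^\beta f_jf_i^{-\beta}$ of $\tilde A^P$ belongs to $\tilde A^{\mathrm{pa}}$. More precisely, $f_i^\beta f_jf_i^{-\beta}$ belongs to the subalgebra of $\tilde A^{\mathrm{pa}}$ generated by $\{f_i^{\pm1},f_j,\beta\}$ in the Kac–Moody case and by $\{f_i^{\pm1},f_j,q_i^{\pm\beta}\}$ (where $q_i^{\beta}=q^{d_i\beta}$) in the $q$-difference case. In particular $s_i(f_j)=f_i^{\alpha_i^\vee}f_jf_i^{-\alpha_i^\vee}\in\tilde A^{\mathrm{pa}}$.
   Context: Let $[a_{ij}]_{i,j\in I}$ be a symmetrizable generalized Cartan matrix ($a_{ii}=2$, $a_{ij}\le0$ for $i\ne j$, $a_{ij}=0\iff a_{ji}=0$, $d_ia_{ij}=d_ja_{ji}$, $d_i\in\mathbb{Z}_{>0}$). $Q^\vee$ is a free $\mathbb{Z}$-module, $P=\mathrm{Hom}(Q^\vee,\mathbb{Z})$, $\alpha_i^\vee\in Q^\vee$ linearly independent, $\alpha_i\in P$ with $\langle\alpha_i^\vee,\alpha_j\rangle=a_{ij}$. Kac–Moody case: $U_-$ is the $\mathbb{C}$-algebra generated by $f_i$ with Serre relations $\sum_{k=0}^{1-a_{ij}}(-1)^kf_i^{(1-a_{ij}-k)}f_jf_i^{(k)}=0$ ($i\ne j$), $f_i^{(k)}=f_i^k/k!$. $q$-difference case: the $\mathbb{C}(q)$-algebra with the same relations, $f_i^{(k)}=f_i^k/[k]_{q_i}!$, $q_i=q^{d_i}$,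 $[a]_q=(q^a-q^{-a})/(q-q^{-1})$. $A$ is a quotient of $U_-$ that is an integral domain with images $f_i\ne0$; $\tilde A=A[f_i^{-1}\mid i\in I]$ the Ore localization at the multiplicative set generated by the $f_i$. $\tilde A^{\mathrm{pa}}$ is $\tilde A[\beta\mid\beta\in Q^\vee]$ (polynomial ring in a $\mathbb{Z}$-basis of $Q^\vee$, variables central, so $Q^\vee\subset\tilde A^{\mathrm{pa}}$) in the Kac–Moody case, and the central Laurent extension $\tilde A[q^\beta\mid\beta\in Q^\vee]$, $q^\beta q^\gamma=q^{\beta+\gamma}$, in the $q$-case. For $\lambda\in P$, $\phi_\lambda:\tilde A^{\mathrm{pa}}\to\tilde A$ fixes $\tilde A$ and substitutes $\beta\mapsto\langle\beta,\lambda\rangle$ (resp. $q^\beta\mapsto q^{\langle\beta,\lambda\rangle}$); via the injective map $(\phi_\lambda)_{\lambda\in P}$ we identify $\tilde A^{\mathrm{pa}}$ with a subalgebra of the product algebra $\tilde A^P$. The fractional power is $f_i^\beta=(f_i^{\langle\beta,\lambda\rangle})_{\lambda\in P}\in\tilde A^P$, and $f_j$ denotes the constant family. *)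

From HB Require Import structures.
From mathcomp Require Import all_boot all_order all_algebra.
From mathcomp Require Import Rstruct complex.
Set Implicit Arguments.
Unset Strict Implicit.
Unset Printing Implicit Defensive.
Import Order.TTheory GRing.Theory Num.Theory.
Local Open Scope ring_scope.

Definition CC : numClosedFieldType := (Rdefinitions.R)[i].
Definition QF : fieldType := {fraction {poly CC}}.
Definition qv : QF := tofrac ('X : {poly CC}).

Definition sym_gcm (I : finType) (a : I -> I -> int) (d : I -> nat) : Prop :=
  [/\ forall i, a i i = 2,
      forall i j, i != j -> a i j <= 0,
      forall i j, (a i j == 0) = (a j i == 0),
      forall i, (0 < d i)%N
    & forall i j, (d i)%:Z * a i j = (d j)%:Z * a j i].

(* Q^vee is the free Z-module Z^m (row vectors); P = Hom(Q^vee, Z) is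
   identified with Z^m through the dual basis, with pairing <beta, lambda>. *)
Definition pairing (m : nat) (beta lam : 'rV[int]_m) : int :=
  \sum_(r < m) beta 0 r * lam 0 r.

Definition realization (I : finType) (a : I -> I -> int) (m : nat)
    (coroot root : I -> 'rV[int]_m) : Prop :=
  (forall c : I -> int, \sum_(i : I) c i *: coroot i = 0 -> forall i, c i = 0)
  /\ (forall i j, pairing (coroot i) (root j) = a i j).

(* fct i n is the factorial used in the divided power f_i^(n):
   n! (Kac-Moody case) or [n]_{q_i}! (q-difference case). *)
Definition dpow (k : fieldType) (A : lalgType k) (c : k) (x : A) (n : nat) : A :=
  c^-1 *: x ^+ n.

Definition serre_rel (k : fieldType) (A : lalgType k) (fct : nat -> k)
    (x y : A) (aij : int) : Prop :=
  let N := `|1 - aij|%N in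
  \sum_(r < N.+1) (-1) ^+ r *: (dpow (fct (N - r)%N) x (N - r) * y * dpow (fct r) x r) = 0.

Definition km_fact (I : finType) (i : I) (n : nat) : CC := (n`!)%:R.

Definition qint (x : QF) (n : nat) : QF := (x ^+ n - x ^- n) / (x - x^-1).
Definition qfact (x : QF) (n : nat) : QF := \prod_(1 <= r < n.+1) qint x r.
Definition q_fact (I : finType) (d : I -> nat) (i : I) (n : nat) : QF :=
  qfact (qv ^+ d i) n.

Inductive alg_gen (k : fieldType) (A : lalgType k) (S : A -> Prop) : A -> Prop :=
| ag_gen x : S x -> alg_gen S x
| ag_scal c : alg_gen S (c%:A)
| ag_add x y : alg_gen S x -> alg_gen S y -> alg_gen S (x + y)
| ag_mul x y : alg_gen S x -> alg_gen S y -> alg_gen S (x * y).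

Definition quotient_of_Uminus (k : fieldType) (I : finType) (fct : I -> nat -> k)
    (a : I -> I -> int) (A : lalgType k) (f : I -> A) : Prop :=
  (forall x, alg_gen (fun y => exists i, y = f i) x)
  /\ (forall i j, i != j -> serre_rel (fct i) (f i) (f j) (a i j)).

Definition is_domain (R : pzRingType) : Prop :=
  (1 : R) != 0 /\ forall x y : R, x * y = 0 -> x = 0 \/ y = 0.

(* B together with iota : A -> B is the Ore localization A[f_i^-1] of A at the
   multiplicative set generated by the f_i: iota is an injective k-algebra
   morphism (A is a domain, so the kernel is trivial), the iota (f_i) are units,
   and every element of B is a fraction iota(a) iota(s)^-1, s a product of f_i's. *)
Definition ore_localization (k : fieldType) (I : finType) (A : lalgType k)
    (B : unitAlgType k) (f : I -> A) (iota : A -> B) : Prop :=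
  [/\ (forall x y, iota (x + y) = iota x + iota y),
      (forall x y, iota (x * y) = iota x * iota y),
      iota 1 = 1,
      (forall (c : k) x, iota (c *: x) = c *: iota x)
    & injective iota] /\
  (forall i, iota (f i) \is a GRing.unit) /\
  (forall b, exists (w : seq I) (x : A), b = iota x * (iota (\prod_(i <- w) f i))^-1).

Inductive fam_gen (k : fieldType) (B : lalgType k) (m : nat)
    (S : ('rV[int]_m -> B) -> Prop) : ('rV[int]_m -> B) -> Prop :=
| fg_gen F : S F -> fam_gen S F
| fg_scal (c : k) : fam_gen S (fun _ => c%:A)
| fg_add F G : fam_gen S F -> fam_gen S G -> fam_gen S (fun l => F l + G l)
| fg_mul F G : fam_gen S F -> fam_gen S G -> fam_gen S (fun l => F l * G l)
| fg_ext F G : (forall l, F l = G l) -> fam_gen S F -> fam_gen S G.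

(* Kac-Moody case: B^pa = B[beta | beta in Q^vee], polynomial ring in the basis
   e_1..e_m of Q^vee (central variables); phi_lambda substitutes e_r |-> lambda_r.
   Its image in B^P: families lambda |-> sum_mu c_mu prod_r lambda_r^mu_r. *)
Definition in_Apa_KM (B : unitAlgType CC) (m : nat) (F : 'rV[int]_m -> B) : Prop :=
  exists s : seq (B * {ffun 'I_m -> nat}),
    forall l, F l = \sum_(p <- s) p.1 * (\prod_(r < m) (l 0 r) ^+ (p.2 r))%:~R.

(* q case: B^pa = B[q^beta | beta in Q^vee] (central Laurent extension), with
   phi_lambda (q^{e_r}) = q^{lambda_r}. *)
Definition in_Apa_q (B : unitAlgType QF) (m : nat) (F : 'rV[int]_m -> B) : Prop :=
  exists s : seq (B * {ffun 'I_m -> int}),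
    forall l, F l = \sum_(p <- s) p.1 * (\prod_(r < m) (qv ^ (l 0 r)) ^ (p.2 r))%:A.

(* the family f_i^beta f_j f_i^-beta : lambda |-> x^<beta,lambda> y x^-<beta,lambda> *)
Definition conj_fam (k : fieldType) (B : unitAlgType k) (m : nat) (x y : B)
    (beta : 'rV[int]_m) : 'rV[int]_m -> B :=
  fun l => x ^ pairing beta l * y * x ^ (- pairing beta l).

Definition gens_KM (B : unitAlgType CC) (m : nat) (x y : B) (beta : 'rV[int]_m)
    (F : 'rV[int]_m -> B) : Prop :=
  [\/ F = (fun _ => x), F = (fun _ => x^-1), F = (fun _ => y)
    | F = (fun l => (pairing beta l)%:~R)].

Definition gens_q (B : unitAlgType QF) (m : nat) (di : nat) (x y : B)
    (beta : 'rV[int]_m) (F : 'rV[int]_m -> B) : Prop :=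
  [\/ F = (fun _ => x), F = (fun _ => x^-1), F = (fun _ => y)
    | F = (fun l => (qv ^ (di%:Z * pairing beta l))%:A)]
  \/ F = (fun l => (qv ^ (- (di%:Z * pairing beta l)))%:A).

(* The conjugates u n := f_i ^ n * f_j * f_i ^ (- n), n : int, satisfy a linear
   recurrence: multiplying the Serre relation by f_i ^ n on the left and by
   f_i ^ (- n - N), N = 1 - a_ij, on the right gives
     prod_(t < N) (T - q_i ^ (N - 1 - 2 t)) u = 0,   (T u) n = u (n + 1),
   with q_i = 1 in the Kac-Moody case.  In the q-case the roots are distinct and
   u n = sum_t q_i ^ ((N - 1 - 2 t) n) z_t; in the Kac-Moody case they all equal 1
   and u n = sum_t binom(n, t) z_t.  The z_t are linear combinations of the u m,
   so they lie in the algebra generated by f_i, f_i^-1, f_j; substituting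
   n = <beta, lambda> writes f_i^beta f_j f_i^-beta as a polynomial in beta
   (resp. q_i^beta, q_i^-beta) with such coefficients. *)

From HB Require Import structures.
From mathcomp Require Import all_boot all_order all_algebra.
From mathcomp Require Import Rstruct complex.
From mathcomp Require Import ring.
Set Implicit Arguments.
Unset Strict Implicit.
Unset Printing Implicit Defensive.
Import GRing.Theory Num.Theory.
Local Open Scope ring_scope.

Section IntRecurrence.
Variables (k : fieldType) (V : lmodType k).

Lemma int_recurrence_eq0 (g : int -> V) (a : k) : a != 0 -> g 0 = 0 ->
  (forall n, g (n + 1) = a *: g n) -> forall n, g n = 0.
Proof.
move=> a0 g0 gS; have gP n : g (n + 1) = 0 -> g n = 0.
  by rewrite gS => /eqP; rewrite scaler_eq0 (negPf a0) => /eqP.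
case=> n; elim: n => [|n IHn] //.
- by rewrite -[n.+1]addn1 PoszD gS IHn scaler0.
- by apply: gP.
- by apply: gP; have -> : Negz n.+1 + 1 = Negz n by rewrite !NegzE; ring.
Qed.

End IntRecurrence.

Section ShiftOperator.
Variables (k : fieldType) (V : lmodType k).

Fixpoint qbinom (x : k) (N r : nat) : k :=
  match N, r with
  | 0, 0 => 1
  | 0, _ => 0
  | N'.+1, 0 => 1
  | N'.+1, r'.+1 => x^-1 ^+ r'.+1 * qbinom x N' r'.+1 + x ^+ (N' - r') * qbinom x N' r'
  end.

Lemma qbinom_gt (x : k) N r : (N < r)%N -> qbinom x N r = 0.
Proof.
elim: N r => [|N IHN] [|r] //= ltNr.
by rewrite (IHN r.+1 (ltnW ltNr)) (IHN r ltNr) !mulr0 addr0.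
Qed.

Lemma qbinom0 (x : k) N : qbinom x N 0 = 1. Proof. by case: N. Qed.

Definition shift_sub (a : k) (u : int -> V) (n : int) : V := u (n + 1) - a *: u n.

Definition qshift_coef (x : k) (N : nat) (s : int) (r : nat) : k :=
  (-1) ^+ r * x ^ (r%:Z * (s - N%:Z + 1)) * qbinom x N r.

(* The expansion of prod_(t < N) (T - x ^ (s - 2 t)) u, where (T u) n = u (n + 1). *)
Definition qshift_op (x : k) (N : nat) (s : int) (u : int -> V) (n : int) : V :=
  \sum_(0 <= r < N.+1) qshift_coef x N s r *: u (n + (N - r)%N%:Z).

Lemma qshift_coef0 (x : k) N s : qshift_coef x N s 0 = 1.
Proof. by rewrite /qshift_coef qbinom0 expr0 mul0r expr0z !mul1r. Qed.

Lemma qshift_coefS (x : k) N s r : x != 0 ->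
  qshift_coef x N.+1 s r.+1 =
    qshift_coef x N (s - 2) r.+1 - qshift_coef x N (s - 2) r * x ^ s.
Proof.
move=> x0; have ux : x \is a GRing.unit by rewrite unitfE.
rewrite /qshift_coef; case: (leqP r N) => rN; last first.
  rewrite (qbinom_gt x (ltnW rN : (N < r.+1)%N)) (qbinom_gt x rN).
  by rewrite (qbinom_gt x (rN : (N.+1 < r.+1)%N)) !mulr0 !mul0r subrr.
simpl qbinom.
have -> : x^-1 ^+ r.+1 = x ^ (- r.+1%:Z) by rewrite -exprz_inv.
have -> : x ^+ (N - r) = x ^ (N%:Z - r%:Z) by rewrite subzn.
rewrite exprS.
set q1 := qbinom x N r.+1; set q0 := qbinom x N r; set sg := (-1) ^+ r.
transitivity (- sg * (x ^ (r.+1%:Z * (s - N.+1%:Z + 1)) * x ^ (- r.+1%:Z)) * q1 +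
  - sg * (x ^ (r.+1%:Z * (s - N.+1%:Z + 1)) * x ^ (N%:Z - r%:Z)) * q0).
  by ring.
rewrite -!exprzDr //.
have -> : r.+1%:Z * (s - N.+1%:Z + 1) + - r.+1%:Z = r.+1%:Z * (s - 2 - N%:Z + 1).
  by rewrite -[r.+1]addn1 -[N.+1]addn1 !PoszD; ring.
have -> : r.+1%:Z * (s - N.+1%:Z + 1) + (N%:Z - r%:Z) = r%:Z * (s - 2 - N%:Z + 1) + s.
  by rewrite -[r.+1]addn1 -[N.+1]addn1 !PoszD; ring.
by rewrite exprzDr //; ring.
Qed.

Lemma qshift_opS x N s u n : x != 0 ->
  qshift_op x N.+1 s u n = qshift_op x N (s - 2) (shift_sub (x ^ s) u) n.
Proof.
move=> x0; rewrite /qshift_op /shift_sub big_nat_recl //.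
under eq_bigr => r _ do rewrite qshift_coefS // scalerBl subSS.
rewrite sumrB.
under [in RHS]eq_bigr => r _ do rewrite scalerBr scalerA.
rewrite [in RHS]sumrB addrA; congr (_ - _).
rewrite [in RHS]big_nat_recl // [in LHS]big_nat_recr //= !qshift_coef0 subn0 subnn.
rewrite {2}/qshift_coef (qbinom_gt x (ltnSn N)) mulr0 scale0r addr0 subn0.
rewrite -addrA -(addrC 1) -intS; congr (_ + _).
apply: eq_big_nat => r /andP [_ rN].
by rewrite -addrA -(addrC 1) -intS subnSK.
Qed.

Lemma shift_sub_geometric (a : k) (rho : nat -> k) N (z : nat -> V) u :
  a != 0 -> (forall t, rho t != 0) -> (forall t, rho t - a != 0) ->
  (forall n, shift_sub a u n = \sum_(0 <= t < N) rho t ^ n *: z t) ->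
  forall n, u n = a ^ n *: (u 0 - \sum_(0 <= t < N) (rho t - a)^-1 *: z t)
                  + \sum_(0 <= t < N) rho t ^ n *: ((rho t - a)^-1 *: z t).
Proof.
move=> a0 rho0 rho_a uE; set w := u 0 - _.
pose R n := a ^ n *: w + \sum_(0 <= t < N) rho t ^ n *: ((rho t - a)^-1 *: z t).
have ua : a \is a GRing.unit by rewrite unitfE.
have RS n : R (n + 1) - a *: R n = shift_sub a u n.
  rewrite uE /R [a *: (_ + _)]scalerDr opprD addrACA.
  rewrite (exprzDr ua n 1) expr1z mulrC -scalerA subrr add0r scaler_sumr -sumrB.
  apply: eq_bigr => t _; rewrite !scalerA -scalerBl; congr (_ *: _).
  have ur : rho t \is a GRing.unit by rewrite unitfE.
  by have := rho_a t; rewrite (exprzDr ur n 1) expr1z => ?; field.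
suff uR n : u n - R n = 0 by move=> n; apply/eqP; rewrite -subr_eq0 uR.
move: n; apply: (int_recurrence_eq0 a0).
  rewrite /R expr0z scale1r.
  under eq_bigr do rewrite expr0z scale1r.
  by rewrite /w subrK subrr.
move=> n; rewrite -[R (n + 1)](subrK (a *: R n)) RS /shift_sub.
by rewrite scalerBr opprD addrA subKr.
Qed.

Variable Q : V -> Prop.
Hypothesis QD : forall v w, Q v -> Q w -> Q (v + w).
Hypothesis QZ : forall (c : k) v, Q v -> Q (c *: v).

Lemma Q0 (v : V) : Q v -> Q 0.
Proof. by move=> /(QZ 0); rewrite scale0r. Qed.

Lemma Q_shift_sub a u : (forall n, Q (u n)) -> forall n, Q (shift_sub a u n).
Proof. by move=> Qu n; apply: QD => //; rewrite -scaleNr; apply: QZ. Qed.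

Lemma Q_sum (N : nat) (z : nat -> V) : (forall t, Q (z t)) ->
  Q (\sum_(0 <= t < N) z t).
Proof. by move=> Qz; apply: (big_ind Q) => //; exact: Q0 (Qz 0%N). Qed.

Lemma qpow_sub_neq0 (x : k) (s : int) (t : nat) : x != 0 ->
  (forall j, (0 < j)%N -> x ^+ j != 1) -> x ^ (s - 2 - 2 * t%:Z) - x ^ s != 0.
Proof.
move=> x0 xj; have ux : x \is a GRing.unit by rewrite unitfE.
rewrite subr_eq0; apply/negP => /eqP E.
have : x ^ s * x ^ (- (t.*2.+2)%N%:Z) = x ^ s * 1.
  rewrite mulr1 -exprzDr // -E; congr (_ ^ _).
  by rewrite !intS -muln2 PoszM; ring.
move/(mulfI (expfz_neq0 s x0)); rewrite -exprnN => /eqP; rewrite invr_eq1.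
by apply/negP/xj.
Qed.

(* As x is not a root of unity, the characteristic roots x ^ (s - 2 t) are distinct. *)
Lemma qshift_op_kernel (x : k) : x != 0 -> (forall j, (0 < j)%N -> x ^+ j != 1) ->
  forall N s u, (forall n, Q (u n)) -> (forall n, qshift_op x N s u n = 0) ->
  exists2 z : nat -> V, forall t, Q (z t) &
    forall n, u n = \sum_(0 <= t < N) (x ^ (s - 2 * t%:Z)) ^ n *: z t.
Proof.
move=> x0 xj; elim=> [|N IHN] s u Qu u0.
  exists (fun=> 0) => [t|n]; first exact: Q0 (Qu 0).
  by rewrite big_nil -(u0 n) /qshift_op big_nat1 qshift_coef0 scale1r subn0 addr0.
set a := x ^ s; pose rho t := x ^ (s - 2 - 2 * t%:Z).
have [z Qz Hz] : exists2 z : nat -> V, forall t, Q (z t) &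
    forall n, shift_sub a u n = \sum_(0 <= t < N) rho t ^ n *: z t.
  by apply: IHN; [exact: Q_shift_sub | move=> n; rewrite -qshift_opS].
have uE := shift_sub_geometric (expfz_neq0 s x0) (fun t => expfz_neq0 _ x0)
  (fun t => qpow_sub_neq0 s t x0 xj) Hz.
exists (fun t => if t is t'.+1 then (rho t' - a)^-1 *: z t'
                 else u 0 - \sum_(0 <= t < N) (rho t - a)^-1 *: z t).
  case=> [|t]; last exact: QZ.
  by apply: QD => //; rewrite -scaleN1r; apply/QZ/Q_sum => t; apply: QZ.
move=> n; rewrite uE big_nat_recl // mulr0 subr0; congr (_ + _).
by apply: eq_bigr => t _; rewrite /rho intS; congr ((x ^ _) ^ n *: _); ring.
Qed.

End ShiftOperator.

Section BinomialSolutions.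
Variables (k : numFieldType) (V : lmodType k).

Definition ibinom (n : int) (t : nat) : k :=
  (\prod_(0 <= r < t) (n%:~R - r%:R)) / (t`!)%:R.

Lemma ibinom0 n : ibinom n 0 = 1.
Proof. by rewrite /ibinom big_geq // fact0 divr1. Qed.

Lemma ibinom0S t : ibinom 0 t.+1 = 0.
Proof. by rewrite /ibinom big_nat_recl // subrr !mul0r. Qed.

Lemma ibinomS n t : ibinom (n + 1) t.+1 - ibinom n t.+1 = ibinom n t.
Proof.
rewrite /ibinom big_nat_recl // [in X in _ - X]big_nat_recr //= factS natrM.
under eq_bigr => r _ do rewrite intrD -addn1 natrD opprD addrACA subrr addr0.
have tf0 : (t`!)%:R != 0 :> k by rewrite pnatr_eq0 -lt0n fact_gt0.
have t10 : (t.+1)%:R != 0 :> k by rewrite pnatr_eq0.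
rewrite intrD subr0; set P := \prod_(0 <= r < t) _.
by field; rewrite tf0 addrC natr1 t10.
Qed.

Lemma shift_sub1_binomial N (z : nat -> V) u :
  (forall n, shift_sub 1 u n = \sum_(0 <= t < N) ibinom n t *: z t) ->
  forall n, u n = u 0 + \sum_(0 <= t < N) ibinom n t.+1 *: z t.
Proof.
move=> uE; pose R n := u 0 + \sum_(0 <= t < N) ibinom n t.+1 *: z t.
have RS n : R (n + 1) - R n = shift_sub 1 u n.
  rewrite uE /R opprD addrACA subrr add0r -sumrB.
  by apply: eq_bigr => t _; rewrite -scalerBl ibinomS.
suff uR n : u n - R n = 0 by move=> n; apply/eqP; rewrite -subr_eq0 uR.
move: n; apply: (int_recurrence_eq0 (oner_neq0 k)).
  rewrite /R big1 ?addr0 ?subrr // => t _.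
  by rewrite ibinom0S scale0r.
move=> n; rewrite -[R (n + 1)](subrK (R n)) RS /shift_sub !scale1r.
by rewrite opprD addrA subKr.
Qed.

Variable Q : V -> Prop.
Hypothesis QD : forall v w, Q v -> Q w -> Q (v + w).
Hypothesis QZ : forall (c : k) v, Q v -> Q (c *: v).

Lemma shift1_op_kernel N s u : (forall n, Q (u n)) ->
  (forall n, qshift_op 1 N s u n = 0) ->
  exists2 z : nat -> V, forall t, Q (z t) &
    forall n, u n = \sum_(0 <= t < N) ibinom n t *: z t.
Proof.
elim: N s u => [|N IHN] s u Qu u0.
  exists (fun=> 0) => [t|n]; first exact: (@Q0 k V Q QZ _ (Qu 0)).
  by rewrite big_nil -(u0 n) /qshift_op big_nat1 qshift_coef0 scale1r subn0 addr0.
have [z Qz Hz] : exists2 z : nat -> V, forall t, Q (z t) &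
    forall n, shift_sub 1 u n = \sum_(0 <= t < N) ibinom n t *: z t.
  apply: (IHN (s - 2)); first exact: (@Q_shift_sub k V Q QD QZ).
  by move=> n; rewrite -(u0 n) qshift_opS ?oner_neq0 ?exp1rz.
exists (fun t => if t is t'.+1 then z t' else u 0); first by case.
by move=> n; rewrite big_nat_recl // ibinom0 scale1r -shift_sub1_binomial.
Qed.

End BinomialSolutions.

Section QFactorial.
Variable k : fieldType.

Definition qintr (x : k) (n : nat) : k := (x ^+ n - x ^- n) / (x - x^-1).
Definition qfactr (x : k) (n : nat) : k := \prod_(1 <= r < n.+1) qintr x r.

Lemma qintr0 (x : k) : qintr x 0 = 0.
Proof. by rewrite /qintr expr0 invr1 subrr mul0r. Qed.

Lemma qintrD (x : k) a b : x != 0 -> x - x^-1 != 0 ->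
  qintr x (a + b) = x^-1 ^+ b * qintr x a + x ^+ a * qintr x b.
Proof.
move=> x0 x1; rewrite /qintr exprD !exprVn.
have xa : x ^+ a != 0 by rewrite expf_neq0.
have xb : x ^+ b != 0 by rewrite expf_neq0.
have x2 : x * x - 1 != 0 by rewrite -(mulfV x0) -mulrBr mulf_neq0.
by field; rewrite x0 x2 xa xb.
Qed.

Lemma qfactr0 (x : k) : qfactr x 0 = 1.
Proof. by rewrite /qfactr big_geq. Qed.

Lemma qfactrS (x : k) n : qfactr x n.+1 = qfactr x n * qintr x n.+1.
Proof. by rewrite /qfactr big_nat_recr. Qed.

Lemma qfactr_neq0 (x : k) : x != 0 -> (forall j, (0 < j)%N -> x ^+ j != 1) ->
  forall n, qfactr x n != 0.
Proof.
move=> x0 xj; have qnum_neq0 t : (0 < t)%N -> x ^+ t - x ^- t != 0.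
  move=> t0; rewrite subr_eq0; apply/negP => /eqP E.
  have : x ^+ t * x ^+ t = 1 by rewrite {1}E mulVf // expf_neq0.
  by rewrite -exprD; apply/eqP/xj; rewrite addn_gt0 t0.
elim=> [|n IHn]; first by rewrite qfactr0 oner_neq0.
rewrite qfactrS mulf_neq0 // /qintr mulf_neq0 ?qnum_neq0 // invr_eq0.
by have := qnum_neq0 1%N isT; rewrite expr1.
Qed.

Lemma qbinom_qfactr (x : k) N r : x != 0 -> x - x^-1 != 0 -> (r <= N)%N ->
  qbinom x N r * (qfactr x (N - r) * qfactr x r) = qfactr x N.
Proof.
move=> x0 x1; elim: N r => [|N IHN] [|r] //=.
- by move=> _; rewrite !qfactr0 !mul1r.
- by move=> _; rewrite subn0 qfactr0 mul1r mulr1.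
move=> rN; rewrite subSS qfactrS.
have T0 : x ^+ (N - r) * qbinom x N r * (qfactr x (N - r) * (qfactr x r * qintr x r.+1))
    = x ^+ (N - r) * qfactr x N * qintr x r.+1.
  by rewrite -(IHN r rN); ring.
have T1 : x^-1 ^+ r.+1 * qbinom x N r.+1 * (qfactr x (N - r) * (qfactr x r * qintr x r.+1))
    = x^-1 ^+ r.+1 * qfactr x N * qintr x (N - r).
  case: (ltnP r N) => rN'.
    rewrite -(IHN r.+1 rN') -qfactrS -(subnSK rN') (qfactrS x (N - r.+1)); ring.
  have -> : r = N by apply/eqP; rewrite eqn_leq rN' andbT.
  by rewrite qbinom_gt // subnn qintr0 !mulr0 mul0r.
rewrite mulrDl T1 T0 qfactrS.
have -> : N.+1 = ((N - r) + r.+1)%N by rewrite addnS subnK.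
by rewrite qintrD //; ring.
Qed.

Lemma qbinom1 N r : qbinom (1 : k) N r = ('C(N, r))%:R.
Proof.
elim: N r => [|N IHN] [|r] //=.
by rewrite invr1 !expr1n !mul1r !IHN binS natrD.
Qed.

Lemma qbinom1_fact N r : (r <= N)%N ->
  qbinom (1 : k) N r * (((N - r)`!)%:R * (r`!)%:R) = (N`!)%:R.
Proof. by move=> rN; rewrite qbinom1 -!natrM [((N - r)`! * _)%N]mulnC bin_fact. Qed.

End QFactorial.

Section FamilyGeneration.
Variables (k : fieldType) (B : lalgType k) (m : nat).
Variable S : ('rV[int]_m -> B) -> Prop.

Lemma fam_gen_sum N (F : nat -> 'rV[int]_m -> B) : (forall t, fam_gen S (F t)) ->
  fam_gen S (fun l => \sum_(0 <= t < N) F t l).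
Proof.
move=> gF; elim: N => [|N IHN].
  by apply: fg_ext (fg_scal S 0) => l; rewrite big_nil scale0r.
by apply: fg_ext (fg_add IHN (gF N)) => l; rewrite big_nat_recr.
Qed.

Lemma fam_gen_prod N (F : nat -> 'rV[int]_m -> B) : (forall t, fam_gen S (F t)) ->
  fam_gen S (fun l => \prod_(0 <= t < N) F t l).
Proof.
move=> gF; elim: N => [|N IHN].
  by apply: fg_ext (fg_scal S 1) => l; rewrite big_nil scale1r.
by apply: fg_ext (fg_mul IHN (gF N)) => l; rewrite big_nat_recr.
Qed.

Lemma fam_gen_exprn (F : 'rV[int]_m -> B) n : fam_gen S F -> fam_gen S (fun l => F l ^+ n).
Proof.
move=> gF; elim: n => [|n IHn].
  by apply: fg_ext (fg_scal S 1) => l; rewrite scale1r expr0.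
by apply: fg_ext (fg_mul IHn gF) => l; rewrite exprSr.
Qed.

Lemma fam_gen_constZ (c : k) (b : B) :
  fam_gen S (fun _ => b) -> fam_gen S (fun _ => c *: b).
Proof. by move=> gb; apply: fg_ext (fg_mul (fg_scal S c) gb) => l; rewrite mulr_algl. Qed.

Lemma fam_gen_scalar_exprz (c : k) (p : 'rV[int]_m -> int) :
  fam_gen S (fun l => (c ^ p l)%:A) -> fam_gen S (fun l => (c ^ (- p l))%:A) ->
  forall e : int, fam_gen S (fun l => ((c ^ e) ^ p l)%:A).
Proof.
move=> gP gN [] t.
  by apply: fg_ext (fam_gen_exprn t gP) => l; rewrite exprzAC -!in_algE rmorphXn.
apply: fg_ext (fam_gen_exprn t.+1 gN) => l.
by rewrite -!in_algE exprzAC NegzE -(invr_expz c) -exprz_inv rmorphXn.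
Qed.

End FamilyGeneration.

Lemma fam_gen_ibinom (k : numFieldType) (B : lalgType k) m
    (S : ('rV[int]_m -> B) -> Prop) (p : 'rV[int]_m -> int) :
  fam_gen S (fun l => (p l)%:~R) -> forall t, fam_gen S (fun l => (ibinom k (p l) t)%:A).
Proof.
move=> gp t; have gfactor r : fam_gen S (fun l => (p l)%:~R + (- (r%:R : k))%:A).
  exact/fg_add/fg_scal.
apply: fg_ext (fg_mul (fam_gen_prod t gfactor) (fg_scal S (t`!%:R)^-1)) => l.
rewrite /ibinom -!in_algE rmorphM rmorph_prod; congr (_ * _).
by apply: eq_bigr => r _; rewrite rmorphB rmorph_int rmorph_nat scaleNr scaler_nat.
Qed.

Section MonomialSpan.
Variables (k : fieldType) (B : lalgType k) (m : nat).
Variables (E : Type) (mon : E -> 'rV[int]_m -> B) (e0 : E) (eadd : E -> E -> E).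
Hypothesis mon0 : forall l, mon e0 l = 1.
Hypothesis monD : forall e e' l, mon (eadd e e') l = mon e l * mon e' l.
Hypothesis monC : forall e l b, b * mon e l = mon e l * b.

(* in_Apa_KM and in_Apa_q are the instances for the monomials in beta, resp. q^beta. *)
Definition in_mon_span (F : 'rV[int]_m -> B) :=
  exists s : seq (B * E), forall l, F l = \sum_(p <- s) p.1 * mon p.2 l.

Lemma fam_gen_in_mon_span (S : ('rV[int]_m -> B) -> Prop) :
  (forall F, S F -> in_mon_span F) -> forall F, fam_gen S F -> in_mon_span F.
Proof.
move=> HS F; elim=> {F}.
- by move=> F /HS.
- by move=> c; exists [:: (c%:A, e0)] => l; rewrite big_seq1 /= mon0 mulr1.
- move=> F G _ [s1 H1] _ [s2 H2]; exists (s1 ++ s2) => l.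
  by rewrite big_cat /= H1 H2.
- move=> F G _ [s1 H1] _ [s2 H2].
  exists [seq (p.1 * q.1, eadd p.2 q.2) | p <- s1, q <- s2] => l.
  rewrite big_allpairs_dep /= H1 H2 mulr_suml; apply: eq_bigr => p _.
  rewrite mulr_sumr; apply: eq_bigr => q _ /=.
  by rewrite monD -mulrA [mon p.2 l * _]mulrA -monC !mulrA.
- by move=> F G FG _ [s H]; exists s => l; rewrite -FG H.
Qed.

End MonomialSpan.

Lemma serre_rel_morph (k : fieldType) (A B : lalgType k) (iota : A -> B)
    (fct : nat -> k) (x y : A) (aij : int) :
  (forall v w, iota (v + w) = iota v + iota w) ->
  (forall v w, iota (v * w) = iota v * iota w) -> iota 1 = 1 ->
  (forall (c : k) v, iota (c *: v) = c *: iota v) ->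
  serre_rel fct x y aij -> serre_rel fct (iota x) (iota y) aij.
Proof.
move=> iD iM i1 iZ; rewrite /serre_rel /=; set N := `|1 - aij|%N => rel.
have i0 : iota 0 = 0 by rewrite -(scale0r 0) iZ scale0r.
have iX n : iota (x ^+ n) = iota x ^+ n by elim: n => [|n IHn]; rewrite ?exprS ?iM ?IHn.
have := congr1 iota rel; rewrite (big_morph iota iD i0) i0; apply: etrans.
apply: eq_bigr => r _.
by rewrite iZ !iM /dpow !iZ !iX.
Qed.

Section Conjugation.
Variables (k : fieldType) (B : unitAlgType k).

Definition conjz (X Y : B) (n : int) : B := X ^ n * Y * X ^ (- n).

Lemma conjzz (X : B) n : X \is a GRing.unit -> conjz X X n = X.
Proof. by move=> uX; rewrite /conjz -{2}(expr1z X) -!exprzDr // addrC addrA addNr add0r. Qed.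

Lemma serre_qshift_op (X Y : B) (x : k) (fct : nat -> k) N :
  X \is a GRing.unit ->
  (forall r, (r <= N)%N -> fct r != 0) ->
  (forall r, (r <= N)%N -> qbinom x N r * (fct (N - r)%N * fct r) = fct N) ->
  \sum_(r < N.+1) (-1) ^+ r *: (dpow (fct (N - r)%N) X (N - r) * Y * dpow (fct r) X r) = 0 ->
  forall n, qshift_op x N (N%:Z - 1) (conjz X Y) n = 0.
Proof.
move=> uX fct_neq0 fct_qbinom rel n.
have rel' : \sum_(0 <= r < N.+1) ((-1) ^+ r * qbinom x N r) *: (X ^+ (N - r) * Y * X ^+ r) = 0.
  have := congr1 (fun v => fct N *: v) rel; rewrite /= scaler0 scaler_sumr.
  apply: etrans; rewrite big_mkord; apply: eq_bigr => r _.
  rewrite /dpow -!scalerAl -scalerAr !scalerA; congr (_ *: _).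
  have rN : (r <= N)%N by rewrite -ltnS ltn_ord.
  have := fct_neq0 _ rN; have := fct_neq0 _ (leq_subr r N).
  by rewrite -(fct_qbinom r rN) => f1 f2; field; rewrite f1 f2.
rewrite /qshift_op (eq_big_nat _ _ (F2 := fun r => X ^ n *
    (((-1) ^+ r * qbinom x N r) *: (X ^+ (N - r) * Y * X ^+ r)) * X ^ (- (n + N%:Z)))).
  by rewrite -mulr_suml -mulr_sumr rel' mulr0 mul0r.
move=> r /andP [_ rN]; rewrite ltnS in rN.
rewrite -scalerAr -scalerAl /qshift_coef.
have -> : r%:Z * (N%:Z - 1 - N%:Z + 1) = 0 by ring.
rewrite expr0z mulr1; congr (_ *: _).
rewrite /conjz (exprzDr uX n) -!mulrA; congr (_ * (_ * (_ * _))).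
by rewrite -[X ^+ r]/(X ^ r%:Z) -exprzDr // -subzn //; congr (_ ^ _); ring.
Qed.

Variables (m : nat) (G : ('rV[int]_m -> B) -> Prop) (X Y : B) (beta : 'rV[int]_m).
Hypotheses (gX : fam_gen G (fun _ => X)) (gXV : fam_gen G (fun _ => X^-1)).
Hypothesis gY : fam_gen G (fun _ => Y).

Lemma fam_gen_conj_fam_self : X \is a GRing.unit -> fam_gen G (conj_fam X X beta).
Proof. by move=> uX; apply: fg_ext gX => l; rewrite -[RHS]/(conjz X X _) conjzz. Qed.

Lemma fam_gen_const_exprz (z : int) : fam_gen G (fun _ => X ^ z).
Proof.
case: z => n; first exact: fam_gen_exprn.
by apply: fg_ext (fam_gen_exprn n.+1 gXV) => l; rewrite exprVn.
Qed.

Lemma fam_gen_const_conjz n : fam_gen G (fun _ => conjz X Y n).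
Proof. exact/fg_mul/fam_gen_const_exprz/fg_mul/gY/fam_gen_const_exprz. Qed.

Lemma fam_gen_conj_fam_expansion N (c : int -> nat -> k) (z : nat -> B) :
  (forall t, fam_gen G (fun _ => z t)) ->
  (forall t, fam_gen G (fun l => (c (pairing beta l) t)%:A)) ->
  (forall n, conjz X Y n = \sum_(0 <= t < N) c n t *: z t) ->
  fam_gen G (conj_fam X Y beta).
Proof.
move=> gz gc conjzE.
apply: fg_ext (fam_gen_sum N (fun t => fg_mul (gc t) (gz t))) => l.
by rewrite -[RHS]/(conjz X Y _) conjzE; apply: eq_bigr => t _; rewrite mulr_algl.
Qed.

End Conjugation.

Lemma qv_neq0 : qv != 0.
Proof. by rewrite /qv tofrac_eq0 polyX_eq0. Qed.

Lemma qvXn_neq1 n : (0 < n)%N -> qv ^+ n != 1.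
Proof.
move=> n_gt0; rewrite /qv -tofracXn -tofrac1 tofrac_eq; apply/negP => /eqP Xn1.
by have := congr1 (fun p : {poly CC} => size p) Xn1; rewrite size_polyXn size_poly1 => -[n0]; rewrite n0 in n_gt0.
Qed.

Section KacMoodyMonomials.
Variables (B : unitAlgType CC) (m : nat).

Definition monKM (e : {ffun 'I_m -> nat}) (l : 'rV[int]_m) : B :=
  (\prod_(r < m) (l 0 r) ^+ (e r))%:~R.

Lemma monKM0 l : monKM [ffun => 0%N] l = 1.
Proof. by rewrite /monKM big1 // => r _; rewrite ffunE expr0. Qed.

Lemma monKMD (e e' : {ffun 'I_m -> nat}) l :
  monKM [ffun r => (e r + e' r)%N] l = monKM e l * monKM e' l.
Proof.
rewrite /monKM -intrM -big_split /=; congr (_%:~R); apply: eq_bigr => r _.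
by rewrite ffunE exprD.
Qed.

Lemma monKMC e l (b : B) : b * monKM e l = monKM e l * b.
Proof. exact: commr_int. Qed.

Lemma gens_KM_in_mon_span (X Y : B) beta F : gens_KM X Y beta F -> in_mon_span monKM F.
Proof.
have cst (b : B) : in_mon_span monKM (fun _ => b).
  by exists [:: (b, [ffun => 0%N])] => l; rewrite big_seq1 /= monKM0 mulr1.
move=> [->|->|->|->] //.
exists [seq ((beta 0 r)%:~R, [ffun t => nat_of_bool (t == r)]) | r <- index_enum 'I_m] => l.
rewrite big_map /pairing (big_morph (fun z : int => z%:~R : B) (intrD B) (mulr0z 1)).
apply: eq_bigr => r _ /=; rewrite intrM /monKM; congr (_ * _%:~R).
rewrite (bigD1 r) //= ffunE eqxx expr1 big1 ?mulr1 // => t tr.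
by rewrite ffunE (negPf tr) expr0.
Qed.

End KacMoodyMonomials.

Section QMonomials.
Variables (B : unitAlgType QF) (m : nat).

Definition monq (e : {ffun 'I_m -> int}) (l : 'rV[int]_m) : B :=
  (\prod_(r < m) (qv ^ (l 0 r)) ^ (e r))%:A.

Lemma monq0 l : monq [ffun => 0] l = 1.
Proof. by rewrite /monq big1 ?scale1r // => r _; rewrite ffunE expr0z. Qed.

Lemma monqD (e e' : {ffun 'I_m -> int}) l :
  monq [ffun r => e r + e' r] l = monq e l * monq e' l.
Proof.
rewrite /monq -!in_algE -rmorphM -big_split /=; congr (in_alg _ _).
by apply: eq_bigr => r _; rewrite ffunE exprzDr // unitfE expfz_neq0 // qv_neq0.
Qed.

Lemma monqC e l (b : B) : b * monq e l = monq e l * b.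
Proof. by rewrite /monq mulr_algl mulr_algr. Qed.

Lemma gens_q_in_mon_span (dd : nat) (X Y : B) beta F :
  gens_q dd X Y beta F -> in_mon_span monq F.
Proof.
have cst (b : B) : in_mon_span monq (fun _ => b).
  by exists [:: (b, [ffun => 0])] => l; rewrite big_seq1 /= monq0 mulr1.
have qpow (sg : int) :
    in_mon_span monq (fun l => (qv ^ (sg * (dd%:Z * pairing beta l)))%:A).
  exists [:: (1, [ffun r => sg * (dd%:Z * beta 0 r)])] => l.
  rewrite big_seq1 /= mul1r /monq; congr (_%:A).
  under eq_bigr do rewrite ffunE exprz_exp.
  have uq : qv \is a GRing.unit by rewrite unitfE qv_neq0.
  rewrite -(big_morph (fun z => qv ^ z) (exprzDr uq) (expr0z qv)) /pairing.
  by rewrite !mulr_sumr; congr (_ ^ _); apply: eq_bigr => r _; ring.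
move=> [[->|->|->|->]|->] //.
  by have [s Hs] := qpow 1; exists s => l; rewrite -Hs mul1r.
by have [s Hs] := qpow (-1); exists s => l; rewrite -Hs mulN1r.
Qed.

End QMonomials.

Lemma fam_gen_conj_fam_KM (B : unitAlgType CC) m (X Y : B) (aij : int)
    (beta : 'rV[int]_m) :
  X \is a GRing.unit -> serre_rel (fun n => (n`!)%:R : CC) X Y aij ->
  fam_gen (gens_KM X Y beta) (conj_fam X Y beta).
Proof.
move=> uX rel; set G := gens_KM X Y beta; set N := `|1 - aij|%N.
pose Q (b : B) := fam_gen G (fun _ => b).
have gX : Q X by apply/fg_gen/Or41.
have gXV : Q X^-1 by apply/fg_gen/Or42.
have gY : Q Y by apply/fg_gen/Or43.
have gp : fam_gen G (fun l => (pairing beta l)%:~R) by apply/fg_gen/Or44.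
have rec n : qshift_op 1 N (N%:Z - 1) (conjz X Y) n = 0.
  apply: serre_qshift_op uX _ _ rel n => r rN; last exact: qbinom1_fact.
  by rewrite pnatr_eq0 -lt0n fact_gt0.
have [z gz conjzE] := shift1_op_kernel (Q := Q) (fun _ _ => @fg_add _ _ _ G _ _)
  (@fam_gen_constZ _ _ _ G) (fam_gen_const_conjz gX gXV gY) rec.
exact: fam_gen_conj_fam_expansion gz (fam_gen_ibinom gp) conjzE.
Qed.

Lemma qfact_qfactr x n : qfact x n = qfactr x n.
Proof. by rewrite /qfact /qfactr. Qed.

Lemma fam_gen_conj_fam_q (B : unitAlgType QF) m (dd : nat) (X Y : B) (aij : int)
    (beta : 'rV[int]_m) :
  (0 < dd)%N -> X \is a GRing.unit -> serre_rel (qfact (qv ^+ dd)) X Y aij ->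
  fam_gen (gens_q dd X Y beta) (conj_fam X Y beta).
Proof.
move=> dd_gt0 uX rel; set G := gens_q dd X Y beta; set N := `|1 - aij|%N.
pose Q (b : B) := fam_gen G (fun _ => b).
have gX : Q X by apply: fg_gen; left; apply: Or41.
have gXV : Q X^-1 by apply: fg_gen; left; apply: Or42.
have gY : Q Y by apply: fg_gen; left; apply: Or43.
have gP : fam_gen G (fun l => (qv ^ (dd%:Z * pairing beta l))%:A).
  by apply: fg_gen; left; apply: Or44.
have gN : fam_gen G (fun l => (qv ^ (- (dd%:Z * pairing beta l)))%:A).
  by apply: fg_gen; right.
set x := qv ^+ dd; have x0 : x != 0 by rewrite expf_neq0 // qv_neq0.
have x_not_root j : (0 < j)%N -> x ^+ j != 1.
  by move=> j_gt0; rewrite -exprM qvXn_neq1 // muln_gt0 dd_gt0.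
have x1 : x - x^-1 != 0.
  rewrite subr_eq0; apply/negP => /eqP xE.
  by have := x_not_root 2%N isT; rewrite expr2 {1}xE mulVf ?eqxx.
have rec n : qshift_op x N (N%:Z - 1) (conjz X Y) n = 0.
  apply: (serre_qshift_op (fct := qfact x) uX _ _ rel n) => r rN; rewrite !qfact_qfactr.
    exact: qfactr_neq0 x0 x_not_root r.
  exact: qbinom_qfactr x0 x1 rN.
have [z gz conjzE] := qshift_op_kernel (Q := Q) (fun _ _ => @fg_add _ _ _ G _ _)
  (@fam_gen_constZ _ _ _ G) x0 x_not_root (fam_gen_const_conjz gX gXV gY) rec.
apply: fam_gen_conj_fam_expansion gz _ conjzE => t.
apply: fg_ext (fam_gen_scalar_exprz gP gN (N%:Z - 1 - 2 * t%:Z)) => l.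
by rewrite /x -[qv ^+ dd]/(qv ^ dd%:Z) !exprz_exp; congr ((qv ^ _)%:A); ring.
Qed.

Theorem mainTheorem5 :
  (* Kac-Moody case *)
  (forall (I : finType) (a : I -> I -> int) (d : I -> nat) (m : nat)
          (coroot root : I -> 'rV[int]_m),
     sym_gcm a d -> realization a coroot root ->
     forall (A : algType CC) (f : I -> A) (B : unitAlgType CC) (iota : A -> B),
       quotient_of_Uminus (@km_fact I) a f -> is_domain A ->
       (forall i, f i != 0) -> ore_localization f iota ->
       forall (beta : 'rV[int]_m) (i j : I),
         in_Apa_KM (conj_fam (iota (f i)) (iota (f j)) beta)
         /\ fam_gen (gens_KM (iota (f i)) (iota (f j)) beta)
                    (conj_fam (iota (f i)) (iota (f j)) beta))
  /\
  (* q-difference case *)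
  (forall (I : finType) (a : I -> I -> int) (d : I -> nat) (m : nat)
          (coroot root : I -> 'rV[int]_m),
     sym_gcm a d -> realization a coroot root ->
     forall (A : algType QF) (f : I -> A) (B : unitAlgType QF) (iota : A -> B),
       quotient_of_Uminus (q_fact d) a f -> is_domain A ->
       (forall i, f i != 0) -> ore_localization f iota ->
       forall (beta : 'rV[int]_m) (i j : I),
         in_Apa_q (conj_fam (iota (f i)) (iota (f j)) beta)
         /\ fam_gen (gens_q (d i) (iota (f i)) (iota (f j)) beta)
                    (conj_fam (iota (f i)) (iota (f j)) beta)).
Proof.
split=> I a d m coroot root [_ _ _ d_gt0 _] _ A f B iota [_ serre] _ _
  [[iD iM i1 iZ _] [unit_f _]] beta i j; set X := iota (f i); set Y := iota (f j).
- have FG : fam_gen (gens_KM X Y beta) (conj_fam X Y beta).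
    have [eq_ij|ij] := eqVneq i j.
      by rewrite /Y -eq_ij; apply: fam_gen_conj_fam_self (unit_f i); apply/fg_gen/Or41.
    exact: fam_gen_conj_fam_KM (unit_f i) (serre_rel_morph iD iM i1 iZ (serre i j ij)).
  split=> //; exact: (fam_gen_in_mon_span (@monKM0 B m) (@monKMD B m) (@monKMC B m)
    (@gens_KM_in_mon_span B m X Y beta) FG).
- have FG : fam_gen (gens_q (d i) X Y beta) (conj_fam X Y beta).
    have [eq_ij|ij] := eqVneq i j.
      rewrite /Y -eq_ij; apply: fam_gen_conj_fam_self (unit_f i).
      by apply: fg_gen; left; apply: Or41.
    exact: fam_gen_conj_fam_q (d_gt0 i) (unit_f i)
      (serre_rel_morph iD iM i1 iZ (serre i j ij)).
  split=> //; exact: (fam_gen_in_mon_span (@monq0 B m) (@monqD B m) (@monqC B m)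
    (@gens_q_in_mon_span B m (d i) X Y beta) FG).
Qed.
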